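(* Let $n\ge4$ be even. Let the additive group $\Lambda=\mathbb R^n$ act on $\mathbb R^{E_n}$ by $\lambda\cdot y=(\lambda_i+\lambda_j+y_{\{i,j\}})_{\{i,j\}\in E_n}$ for $\lambda\in\Lambda$, $y\in\mathbb R^{E_n}$. Then every $\Lambda$-invariant subset of $\mathbb R^{E_n}$ is fiber-invariant for the linear map $f:\mathbb R^{E_n}\to\mathbb R^{\mathcal M_n}$, $f(y)=(y_M)_{M\in\mathcal M_n}$, where $y_M=\sum_{e\in M}y_e$.
   Context: $E_n$ is the set of edges of the complete graph on $[n]=\{1,\dots,n\}$ and $\mathcal M_n$ is the set of its perfect matchings. For a map $f:X\to Y$, $D\subseteq X$ is fiber-invariant for $f$ if for each $y\in f(D)$ the fiber $f^{-1}(y)$ is contained in $D$. *)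

From mathcomp Require Import all_boot all_order all_algebra.
From mathcomp Require Import reals.
Set Implicit Arguments. Unset Strict Implicit. Unset Printing Implicit Defensive.
Import Order.TTheory GRing.Theory Num.Theory.
Local Open Scope ring_scope.

Definition edge (n : nat) := {e : {set 'I_n} | #|e| == 2%N}.

Definition perfect_matching (n : nat) (M : {set edge n}) : bool :=
  [forall v : 'I_n, #|[set e in M | v \in val e]| == 1%N].

Definition act (R : realType) (n : nat) (lam : 'I_n -> R) (y : edge n -> R)
  : edge n -> R :=
  fun e => (\sum_(i in val e) lam i) + y e.

Definition Lambda_invariant (R : realType) (n : nat) (D : (edge n -> R) -> Prop)
  : Prop := forall (lam : 'I_n -> R) (y : edge n -> R), D y -> D (act lam y).

Definition yM (R : realType) (n : nat) (y : edge n -> R) (M : {set edge n}) : R :=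
  \sum_(e in M) y e.

Definition f_match (R : realType) (n : nat) (y : edge n -> R)
  : {M : {set edge n} | perfect_matching M} -> R :=
  fun M => yM y (val M).

Definition fiber_invariant (X Y : Type) (g : X -> Y) (D : X -> Prop) : Prop :=
  forall z : Y, (exists2 x, D x & g x = z) -> forall x', g x' = z -> D x'.

(* If x and x' have the same matching sums, then d := x' - x sums to 0 over
   every perfect matching.  Encode a perfect matching by its partner map, a
   fixed-point-free involution p of 'I_n.  Conjugating p by the transposition
   of y and p x re-pairs {x, p x}, {y, p y} into {x, y}, {p x, p y} and
   changes nothing else, so d ab + d ce = d ac + d be for all distinct
   a, b, c, e (n even makes every such pairing extendable).  For n >= 3 this
   four-point condition makes lam i := (d ij + d ic - d jc) / 2 independent of
   j and c, and then d ij = lam i + lam j, i.e. x' = lam . x. *)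
From mathcomp Require Import all_boot all_order all_algebra perm.
From mathcomp Require Import reals lra zify.
From Stdlib Require Import FunctionalExtensionality.
Set Implicit Arguments. Unset Strict Implicit. Unset Printing Implicit Defensive.
Import Order.TTheory GRing.Theory Num.Theory.
Local Open Scope ring_scope.

Section FixedPointFreeInvolutions.
Variable T : finType.

Definition fpf_involution (p : T -> T) := involutive p /\ forall v, p v != v.

Lemma fpf_involution_conj (s p : T -> T) :
  involutive s -> fpf_involution p -> fpf_involution (s \o p \o s).
Proof.
move=> sK [pK p_fpf]; split => v /=; first by rewrite sK pK sK.
by apply: contra (p_fpf (s v)) => /eqP {2}<-; rewrite sK.
Qed.

Definition swap_partners (p : T -> T) (x y : T) : T -> T :=
  let s := tperm y (p x) in s \o p \o s.

Section SwapPartners.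
Variables (p : T -> T) (x y : T).
Hypotheses (p_fpf : fpf_involution p) (y_x : y != x) (y_px : y != p x).

Let pK : involutive p := p_fpf.1.
Let px_x : p x != x := p_fpf.2 x.
Let y_py : y != p y. Proof. by rewrite eq_sym p_fpf.2. Qed.
Let px_py : p x != p y. Proof. by rewrite (inj_eq (can_inj pK)) eq_sym. Qed.

Lemma swap_partners_fpf : fpf_involution (swap_partners p x y).
Proof. exact/fpf_involution_conj/p_fpf/tpermK. Qed.

Lemma swap_partnersK : involutive (swap_partners p x y).
Proof. exact: swap_partners_fpf.1. Qed.

Lemma swap_partners_x : swap_partners p x y x = y.
Proof. by rewrite /swap_partners /= [tperm _ _ x]tpermD // tpermR. Qed.

Lemma swap_partners_y : swap_partners p x y y = x.
Proof. by have := swap_partnersK x; rewrite swap_partners_x. Qed.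

Lemma swap_partners_px : swap_partners p x y (p x) = p y.
Proof. by rewrite /swap_partners /= tpermR tpermD. Qed.

Lemma swap_partners_py : swap_partners p x y (p y) = p x.
Proof. by have := swap_partnersK (p x); rewrite swap_partners_px. Qed.

Lemma swap_partners_out v : v != x -> v != y -> v != p x -> v != p y ->
  swap_partners p x y v = p v.
Proof.
move=> v_x v_y v_px v_py.
rewrite /swap_partners /= [tperm _ _ v]tpermD 1?eq_sym //.
rewrite tpermD //.
- by rewrite eq_sym (can2_eq pK pK).
- by rewrite (inj_eq (can_inj pK)) eq_sym.
Qed.

End SwapPartners.

Lemma exists_fpf_involution_with (a b c e : T) :
  (exists p0, fpf_involution p0) ->
  a != b -> a != c -> a != e -> b != c -> b != e -> c != e ->
  exists p, [/\ fpf_involution p, p a = b & p c = e].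
Proof.
move=> [p0 p0_fpf] ab ac ae bc be ce.
have [p1 [p1_fpf p1a]] : exists p1, fpf_involution p1 /\ p1 a = b.
  have [->|b_p0a] := eqVneq b (p0 a); first by exists p0.
  have b_a : b != a by rewrite eq_sym.
  by exists (swap_partners p0 a b); split; [apply: swap_partners_fpf | apply: swap_partners_x].
have [->|e_p1c] := eqVneq e (p1 c); first by exists p1.
have p1K := p1_fpf.1.
have a_p1 v : v != b -> a != p1 v by move=> vb; rewrite eq_sym (can2_eq p1K p1K) p1a.
have e_c : e != c by rewrite eq_sym.
exists (swap_partners p1 c e); split; last exact: swap_partners_x.
- exact: swap_partners_fpf.
- by rewrite swap_partners_out // a_p1 // eq_sym.
Qed.

End FixedPointFreeInvolutions.

Lemma exists_fpf_involution_ord (n : nat) :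
  ~~ odd n -> exists p : 'I_n -> 'I_n, fpf_involution p.
Proof.
move=> n_even.
have partner_lt (v : 'I_n) : ((if odd v then v.-1 else v.+1) < n)%N.
  case: v => v /= v_lt; case: ifP => v_odd; first exact: leq_ltn_trans (leq_pred v) v_lt.
  by rewrite ltn_neqAle v_lt andbT; apply: contraNneq n_even => <- /=; rewrite v_odd.
exists (fun v => Ordinal (partner_lt v)); split => v.
  by apply: val_inj; case: v => -[|v] _ //=; case Ev: (odd v); rewrite /= ?Ev.
by rewrite -val_eqE; case: v => -[|v] _ //=; case Ev: (odd v); rewrite /= ?Ev; lia.
Qed.

Lemma exists_third (T : finType) (i j : T) :
  (2 < #|T|)%N -> exists c : T, c != i /\ c != j.
Proof.
move=> T_gt2; have : (0 < #|~: [set i; j]|)%N.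
  by move: T_gt2; rewrite -(cardsC [set i; j]) cards2; case: (i != j) => /=; lia.
by case/card_gt0P => c; rewrite !inE negb_or => /andP[]; exists c.
Qed.

Section MatchingOfInvolution.
Variables (R : realType) (n : nat) (d : edge n -> R).

(* [insub] fails on [[set i; i]], which therefore gets the junk weight 0. *)
Definition pair_weight (i j : 'I_n) : R := oapp d 0 (insub [set i; j]).

Lemma pair_weightC i j : pair_weight i j = pair_weight j i.
Proof. by rewrite /pair_weight setUC. Qed.

Lemma pair_weight_edge (e : edge n) i j : val e = [set i; j] -> pair_weight i j = d e.
Proof. by rewrite /pair_weight => <-; rewrite valK. Qed.

Definition matching_of (p : 'I_n -> 'I_n) : {set edge n} :=
  [set e | [exists v, val e == [set v; p v]]].

Variable p : 'I_n -> 'I_n.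
Hypothesis p_fpf : fpf_involution p.

Lemma matching_of_at v : exists e : edge n,
  val e = [set v; p v] /\ [set e0 in matching_of p | v \in val e0] = [set e].
Proof.
have two : #|[set v; p v]| == 2%N by rewrite cards2 [v == _]eq_sym (p_fpf.2 v).
exists (Sub [set v; p v] two); split=> //; apply/setP => e; rewrite !inE.
apply/andP/eqP => [[/existsP[u /eqP e_u] v_e]|->]; last first.
  by split; [apply/existsP; exists v | rewrite !inE eqxx].
apply: val_inj; move: v_e; rewrite /= e_u !inE.
by case/orP => /eqP ->; rewrite // p_fpf.1 setUC.
Qed.

Lemma matching_of_perfect : perfect_matching (matching_of p).
Proof. by apply/forallP => v; have [e [_ ->]] := matching_of_at v; rewrite cards1. Qed.

Lemma sum_pair_weight_matching_of :
  \sum_v pair_weight v (p v) = yM d (matching_of p) *+ 2.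
Proof.
transitivity (\sum_v \sum_(e in matching_of p | v \in val e) d e).
  apply: eq_bigr => v _; have [e [e_v at_v]] := matching_of_at v.
  by rewrite -big_set at_v big_set1 (pair_weight_edge e_v).
rewrite (exchange_big_dep (mem (matching_of p))) /=; last by move=> v e _ /andP[].
rewrite /yM -sumrMnl.
apply: eq_bigr => e e_M; rewrite (eq_bigl (mem (val e))) => [|v]; last by rewrite e_M.
by rewrite sumr_const (eqP (valP e)).
Qed.

End MatchingOfInvolution.

Section FourPoint.
Variables (R : realType) (n : nat) (d : edge n -> R).
Hypothesis d_matching0 : forall M, perfect_matching M -> yM d M = 0.

Lemma sum_pair_weight0 p : fpf_involution p -> \sum_v pair_weight d v (p v) = 0.
Proof.
move=> p_fpf; rewrite sum_pair_weight_matching_of // d_matching0 ?mul0rn //.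
exact: (matching_of_perfect p_fpf).
Qed.

Lemma pair_weight_swap_partners p x y : fpf_involution p -> y != x -> y != p x ->
  pair_weight d x (p x) + pair_weight d y (p y)
  = pair_weight d x y + pair_weight d (p x) (p y).
Proof.
move=> p_fpf y_x y_px; have pK := p_fpf.1.
set w := pair_weight d; set q := swap_partners p x y.
have px_x : p x != x := p_fpf.2 x.
have py_y : p y != y := p_fpf.2 y.
have py_x : p y != x by rewrite (can2_eq pK pK).
have py_px : p y != p x by rewrite (inj_eq (can_inj pK)).
have : \sum_v (w v (p v) - w v (q v)) = 0.
  by rewrite sumrB !sum_pair_weight0 ?subrr //; apply: swap_partners_fpf.
rewrite (bigD1 x) // (bigD1 y) // (bigD1 (p x)) /=; last by rewrite px_x eq_sym.
rewrite (bigD1 (p y)) /=; last by rewrite py_x py_y py_px.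
rewrite big1 => [|v /andP[/andP[/andP[v_x v_y] v_px] v_py]]; last first.
  by rewrite /q swap_partners_out ?subrr.
rewrite /q swap_partners_x ?swap_partners_y ?swap_partners_px ?swap_partners_py // !pK.
rewrite [w y x]pair_weightC [w (p x) x]pair_weightC [w (p y) y]pair_weightC.
rewrite [w (p y) (p x)]pair_weightC /w; lra.
Qed.

Lemma pair_weight_four_point (a b c e : 'I_n) : ~~ odd n ->
  a != b -> a != c -> a != e -> b != c -> b != e -> c != e ->
  pair_weight d a b + pair_weight d c e = pair_weight d a c + pair_weight d b e.
Proof.
move=> n_even ab ac ae bc be ce.
have [p [p_fpf pa pc]] :=
  exists_fpf_involution_with (exists_fpf_involution_ord n_even) ab ac ae bc be ce.
by rewrite -pa -pc; apply: pair_weight_swap_partners => //; rewrite eq_sym ?pa.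
Qed.

End FourPoint.

Section PairPotential.
Variables (R : realFieldType) (T : finType) (w : T -> T -> R).
Hypothesis wC : forall i j, w i j = w j i.
Hypothesis w_four_point : forall a b c e : T,
  a != b -> a != c -> a != e -> b != c -> b != e -> c != e ->
  w a b + w c e = w a c + w b e.

Definition twice_potential (i j c : T) : R := w i j + w i c - w j c.

Lemma twice_potentialC i j c : twice_potential i j c = twice_potential i c j.
Proof. by rewrite /twice_potential (wC j c); lra. Qed.

Lemma twice_potential_indep_apex i j c c' : j != i -> c != i -> c != j ->
  c' != i -> c' != j -> twice_potential i j c = twice_potential i j c'.
Proof.
move=> j_i c_i c_j c'_i c'_j; have [-> //|c_c'] := eqVneq c c'.
have : w i c + w c' j = w i c' + w c j by apply: w_four_point; rewrite // eq_sym.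
by rewrite /twice_potential (wC c' j) (wC c j); lra.
Qed.

Lemma twice_potential_indep i j c j' c' :
  j != i -> c != i -> c != j -> j' != i -> c' != i -> c' != j' ->
  twice_potential i j c = twice_potential i j' c'.
Proof.
have [<- j_i c_i c_j _ c'_i c'_j|j_j' j_i c_i c_j j'_i c'_i c'_j'] := eqVneq j j'.
  exact: twice_potential_indep_apex.
transitivity (twice_potential i j j').
  by apply: twice_potential_indep_apex; rewrite // eq_sym.
rewrite twice_potentialC; apply: twice_potential_indep_apex => //; rewrite eq_sym.
Qed.

Definition pair_potential (i : T) : R :=
  if [pick jc : T * T | [&& jc.1 != i, jc.2 != i & jc.2 != jc.1]] is Some (j, c)
  then twice_potential i j c / 2 else 0.

Lemma pair_potentialE i j c : j != i -> c != i -> c != j ->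
  pair_potential i = twice_potential i j c / 2.
Proof.
move=> j_i c_i c_j; rewrite /pair_potential; case: pickP => [[j' c'] /and3P[] /=|].
  by move=> j'_i c'_i c'_j'; rewrite (twice_potential_indep j'_i c'_i c'_j' j_i c_i c_j).
by move=> /(_ (j, c)); rewrite /= j_i c_i c_j.
Qed.

Lemma pair_potential_sum i j : (2 < #|T|)%N -> i != j ->
  pair_potential i + pair_potential j = w i j.
Proof.
move=> T_gt2 i_j; have j_i : j != i by rewrite eq_sym.
have [c [c_i c_j]] := exists_third i j T_gt2.
rewrite (pair_potentialE j_i c_i c_j) (pair_potentialE i_j c_j c_i).
by rewrite /twice_potential (wC j i); lra.
Qed.

End PairPotential.

Lemma matching_sums0_potential (R : realType) (n : nat) (d : edge n -> R) :
  (4 <= n)%N -> ~~ odd n -> (forall M, perfect_matching M -> yM d M = 0) ->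
  forall e : edge n, d e = \sum_(i in val e) pair_potential (pair_weight d) i.
Proof.
move=> n_ge4 n_even d_matching0 e; have /cards2P[i [j [i_j e_ij]]] := valP e.
rewrite e_ij big_setU1 ?big_set1 ?inE //= pair_potential_sum ?card_ord //.
- exact/esym/pair_weight_edge.
- exact: pair_weightC.
- by move=> a b c c'; apply: pair_weight_four_point.
- exact: ltnW.
Qed.

Theorem theorem4p6 (R : realType) (n : nat) :
  (4 <= n)%N -> ~~ odd n ->
  forall D : (edge n -> R) -> Prop,
    Lambda_invariant D -> fiber_invariant (@f_match R n) D.
Proof.
move=> n_ge4 n_even D D_inv _ [x Dx <-] x' fx'.
pose d e := x' e - x e.
have d_matching0 M : perfect_matching M -> yM d M = 0.
  move=> M_pm; have := congr1 (fun g => g (exist _ M M_pm)) fx'.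
  by rewrite /f_match /yM sumrB /= => ->; rewrite subrr.
suff -> : x' = act (pair_potential (pair_weight d)) x by apply: D_inv.
apply: functional_extensionality => e.
by rewrite /act -matching_sums0_potential // /d subrK.
Qed.
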